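(* Let $g(x,y)=xy$. Let $t>0$ and let $I=[a,a+3t]$, $J=[b,b+3t]$ with $\tfrac23\le a\le b\le 1$, and assume $I$ and $J$ are either identical or disjoint. Write $\ddot I=[a,a+t]\cup[a+2t,a+3t]$ and $\ddot J=[b,b+t]\cup[b+2t,b+3t]$. Then: (i) if $a<b$, then $g(\ddot I,\ddot J) = g(I,J)$; (ii) if $a=b$ (so $I=J$), then $g(\ddot I,\ddot I) = g(I,I)\setminus\big((a+2t)^2-t^2,\,(a+2t)^2\big)$.
   Context: For sets $A,B\subset\mathbb{R}$, $g(A,B)=\{xy: x\in A, y\in B\}$. *)

From Stdlib Require Import Reals.
Open Scope R_scope.

Definition g (A B : R -> Prop) : R -> Prop :=
  fun z => exists x y, A x /\ B y /\ z = x * y.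

Definition Icc (l u : R) : R -> Prop := fun x => l <= x <= u.

Definition Ioo (l u : R) : R -> Prop := fun x => l < x < u.

Definition ddot (a t : R) : R -> Prop :=
  fun x => Icc a (a + t) x \/ Icc (a + 2 * t) (a + 3 * t) x.

Definition set_eq (A B : R -> Prop) : Prop := forall z, A z <-> B z.

(* Products of intervals of positive reals are intervals:
   g([x0,x1],[y0,y1]) = [x0 y0, x1 y1].  Since g distributes over unions,
   g(ddot I, ddot J) is the union of the four product intervals of the thirds
   [a,a+t], [a+2t,a+3t] of I and [b,b+t], [b+2t,b+3t] of J.  Consecutive ones
   overlap because b <= 1 <= 3a + 3t and, when a < b, because disjointness of
   I and J forces b > a + 3t >= a + t.  When a = b the two middle intervals
   coincide, and the last one starts at (a+2t)^2, beyond the end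
   (a+t)(a+3t) = (a+2t)^2 - t^2 of the others. *)
From Stdlib Require Import Reals Lra Psatz.
Open Scope R_scope.

Lemma g_or_l (A A' B : R -> Prop) z :
  g (fun x => A x \/ A' x) B z <-> g A B z \/ g A' B z.
Proof.
  split.
  - intros (x & y & [hA | hA'] & hB & ->); [left | right]; exists x, y; auto.
  - intros [(x & y & hA & hB & ->) | (x & y & hA' & hB & ->)];
      exists x, y; auto.
Qed.

Lemma g_or_r (A B B' : R -> Prop) z :
  g A (fun y => B y \/ B' y) z <-> g A B z \/ g A B' z.
Proof.
  split.
  - intros (x & y & hA & [hB | hB'] & ->); [left | right]; exists x, y; auto.
  - intros [(x & y & hA & hB & ->) | (x & y & hA & hB' & ->)];
      exists x, y; auto.
Qed.

Lemma g_Icc x0 x1 y0 y1 z :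
  0 < x0 -> x0 <= x1 -> 0 < y0 -> y0 <= y1 ->
  g (Icc x0 x1) (Icc y0 y1) z <-> Icc (x0 * y0) (x1 * y1) z.
Proof.
  unfold Icc; intros hx0 hx01 hy0 hy01; split.
  - intros (x & y & hx & hy & ->); split; apply Rmult_le_compat; lra.
  - intros hz.
    destruct (Rle_lt_dec z (x0 * y1)) as [hlow | hhigh].
    + exists x0, (z / x0); repeat split; try lra.
      * apply (Rmult_le_reg_l x0); [lra |]; field_simplify; lra.
      * apply (Rmult_le_reg_l x0); [lra |]; field_simplify; lra.
      * field; lra.
    + exists (z / y1), y1; repeat split; try lra.
      * apply (Rmult_le_reg_r y1); [lra |]; field_simplify; lra.
      * apply (Rmult_le_reg_r y1); [lra |]; field_simplify; lra.
      * field; lra.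
Qed.

Lemma g_ddot a b t z :
  0 < a -> 0 < b -> 0 < t ->
  g (ddot a t) (ddot b t) z <->
    (Icc (a * b) ((a + t) * (b + t)) z \/
     Icc (a * (b + 2 * t)) ((a + t) * (b + 3 * t)) z) \/
    (Icc ((a + 2 * t) * b) ((a + 3 * t) * (b + t)) z \/
     Icc ((a + 2 * t) * (b + 2 * t)) ((a + 3 * t) * (b + 3 * t)) z).
Proof.
  intros ha hb ht; unfold ddot.
  rewrite g_or_l, !g_or_r, !g_Icc by lra.
  reflexivity.
Qed.

Lemma Icc_union_overlap l1 u1 l2 u2 z :
  l1 <= l2 -> l2 <= u1 -> u1 <= u2 ->
  Icc l1 u1 z \/ Icc l2 u2 z <-> Icc l1 u2 z.
Proof. unfold Icc; intros; split; [intros [] | intros]; lra. Qed.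

Lemma Icc_union_subset l1 u1 l2 u2 z :
  l1 <= l2 -> u2 <= u1 -> Icc l1 u1 z \/ Icc l2 u2 z <-> Icc l1 u1 z.
Proof. unfold Icc; intros; split; [intros [] | intros]; lra. Qed.

Lemma Icc_union_gap l m m' u z :
  l <= m -> m <= m' -> m' <= u ->
  Icc l m z \/ Icc m' u z <-> Icc l u z /\ ~ Ioo m m' z.
Proof.
  unfold Icc, Ioo; intros; split.
  - intros []; split; lra.
  - intros [hz hgap]; destruct (Rle_lt_dec z m); [left; lra | right].
    destruct (Rlt_le_dec z m'); [exfalso; apply hgap |]; lra.
Qed.

Lemma Icc_shift_eq_or_disjoint_sep a b L :
  set_eq (Icc a (a + L)) (Icc b (b + L)) \/
  (forall x, ~ (Icc a (a + L) x /\ Icc b (b + L) x)) ->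
  0 <= L -> a < b -> a + L < b.
Proof.
  unfold Icc; intros [heq | hdisj] hL hab.
  - destruct (heq a) as [ha _]; lra.
  - destruct (Rlt_le_dec (a + L) b); [assumption |].
    exfalso; apply (hdisj b); lra.
Qed.

Theorem lemma3p8 (a b t : R) (ht : 0 < t)
  (hab : 2 / 3 <= a /\ a <= b /\ b <= 1)
  (hIJ : set_eq (Icc a (a + 3 * t)) (Icc b (b + 3 * t)) \/
         (forall x, ~ (Icc a (a + 3 * t) x /\ Icc b (b + 3 * t) x))) :
  (a < b ->
     set_eq (g (ddot a t) (ddot b t)) (g (Icc a (a + 3 * t)) (Icc b (b + 3 * t)))) /\
  (a = b ->
     set_eq (g (ddot a t) (ddot a t))
            (fun z => g (Icc a (a + 3 * t)) (Icc a (a + 3 * t)) z /\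
                      ~ Ioo ((a + 2 * t) ^ 2 - t ^ 2) ((a + 2 * t) ^ 2) z)).
Proof.
  destruct hab as [ha [hab hb]]; split.
  - intros hlt z.
    assert (hsep : a + 3 * t < b)
      by (apply (Icc_shift_eq_or_disjoint_sep a b (3 * t) hIJ); lra).
    rewrite g_ddot, g_Icc, !Icc_union_overlap by nra.
    reflexivity.
  - intros <- z.
    rewrite g_ddot, g_Icc by lra.
    rewrite (Icc_union_overlap (a * a)), <- or_assoc, (Icc_union_subset (a * a))
      by nra.
    replace ((a + 2 * t) ^ 2 - t ^ 2) with ((a + t) * (a + 3 * t)) by ring.
    replace ((a + 2 * t) ^ 2) with ((a + 2 * t) * (a + 2 * t)) by ring.
    rewrite <- Icc_union_gap by nra.
    reflexivity.
Qed.
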